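(* Let $(S,\sqcup,\cap)$ be an ado-semilattice. Then for all $a,b,c\in S$: (1) $a\sqcup b=b\sqcup a$ if and only if $a$ and $b$ have an upper bound in $(S,\leq)$; (2) $a\cap((a\cap b)\sqcup c)=a\cap((a\cap c)\sqcup b)$.
   Context: An o-semilattice is an algebra $(L,\cap,\sqcup)$ such that $(L,\cap)$ is a semilattice and, with $x\leq y$ iff $x=x\cap y$, for all $x,y,z$: (i) $x\leq x\sqcup y$; (ii) $(x\cap y)\sqcup(y\cap z)\leq y$; (iii) $x\sqcup y\leq x\sqcup(y\cap(x\sqcup y))$; (iv) $x\cap z\leq(x\cap y)\sqcup z$. It is distributive if $(a\cap d)\sqcup((b\cap d)\cap(c\cap d))=((a\cap d)\sqcup(b\cap d))\cap((a\cap d)\sqcup(c\cap d))$ for all $a,b,c,d$. An ado-semilattice is a distributive o-semilattice in which $\sqcup$ is associative. Here $\leq$ is the semilattice order $x\leq y$ iff $x=x\cap y$. *)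

Section OSemilattice.
Variable L : Type.
Variables (meet join : L -> L -> L).

Definition is_semilattice : Prop :=
  (forall x y z, meet x (meet y z) = meet (meet x y) z) /\
  (forall x y, meet x y = meet y x) /\
  (forall x, meet x x = x).

Definition sle (x y : L) : Prop := x = meet x y.

Definition is_osemilattice : Prop :=
  is_semilattice /\
  (forall x y, sle x (join x y)) /\
  (forall x y z, sle (join (meet x y) (meet y z)) y) /\
  (forall x y, sle (join x y) (join x (meet y (join x y)))) /\
  (forall x y z, sle (meet x z) (join (meet x y) z)).

Definition is_distributive : Prop :=
  forall a b c d,
    join (meet a d) (meet (meet b d) (meet c d)) =
    meet (join (meet a d) (meet b d)) (join (meet a d) (meet c d)).

Definition is_ado_semilattice : Prop :=
  is_osemilattice /\ is_distributive /\
  (forall x y z, join x (join y z) = join (join x y) z).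

End OSemilattice.

Arguments sle {L} meet x y.
Arguments is_ado_semilattice {L} meet join.

(* Below a common upper bound u, the axioms of an o-semilattice make [x ⊔ y]
   the least upper bound of x and y, so [x ⊔ y] and [y ⊔ x] bound each other;
   conversely [a ⊔ b] bounds both a and b as soon as it equals [b ⊔ a].
   For (2), axiom (iii) lets one replace c by [c ∩ t] inside
   [t = (a ∩ b) ⊔ c], so that everything lives below t, where distributivity
   gives [a ∩ ((a ∩ b) ⊔ c) = (a ∩ b) ⊔ (a ∩ c)]; the right-hand side is
   symmetric in b and c since both terms lie below a. *)

From Stdlib Require Import Setoid.

Section OSemilatticeTheory.

Variables (S : Type) (meet join : S -> S -> S).

Local Notation "x ≤ y" := (sle meet x y) (at level 70).

Hypothesis os : is_osemilattice S meet join.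

Lemma meetA x y z : meet x (meet y z) = meet (meet x y) z.
Proof. apply os. Qed.

Lemma meetC x y : meet x y = meet y x.
Proof. apply os. Qed.

Lemma meetxx x : meet x x = x.
Proof. apply os. Qed.

Lemma le_joinl x y : x ≤ join x y.
Proof. apply os. Qed.

Lemma join_meet_le x y z : join (meet x y) (meet y z) ≤ y.
Proof. apply os. Qed.

Lemma join_le_join_meet x y : join x y ≤ join x (meet y (join x y)).
Proof. apply os. Qed.

Lemma meet_le_join_meet x y z : meet x z ≤ join (meet x y) z.
Proof. apply os. Qed.

Lemma le_refl x : x ≤ x.
Proof. unfold sle; rewrite meetxx; reflexivity. Qed.

Lemma le_anti x y : x ≤ y -> y ≤ x -> x = y.
Proof. unfold sle; intros xy yx; rewrite xy, meetC, <- yx; reflexivity. Qed.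

Lemma le_meetl x y : meet x y ≤ x.
Proof. unfold sle; rewrite (meetC x y), <- meetA, meetxx; reflexivity. Qed.

Lemma le_meetr x y : meet x y ≤ y.
Proof. unfold sle; rewrite <- meetA, meetxx; reflexivity. Qed.

Lemma le_meet x y z : x ≤ y -> x ≤ z -> x ≤ meet y z.
Proof.
  unfold sle; intros xy xz.
  rewrite meetA, <- xy; exact xz.
Qed.

Lemma join_le x y v : x ≤ v -> y ≤ v -> join x y ≤ v.
Proof.
  unfold sle; intros xv yv.
  pose proof (join_meet_le x v y) as h.
  rewrite <- xv, (meetC v y), <- yv in h; exact h.
Qed.

Lemma le_joinr_bounded x y v : x ≤ v -> y ≤ v -> y ≤ join x y.
Proof.
  unfold sle; intros xv yv.
  pose proof (meet_le_join_meet v x y) as h.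
  rewrite (meetC v x), <- xv, (meetC v y), <- yv in h; exact h.
Qed.

Lemma join_idPr x y : x ≤ y -> join x y = y.
Proof.
  intros xy; apply le_anti.
  - apply join_le; [exact xy | apply le_refl].
  - apply (le_joinr_bounded x y y); [exact xy | apply le_refl].
Qed.

Lemma joinC_bounded x y v : x ≤ v -> y ≤ v -> join x y = join y x.
Proof.
  intros xv yv; apply le_anti; apply join_le.
  - apply (le_joinr_bounded y x v); assumption.
  - apply le_joinl.
  - apply (le_joinr_bounded x y v); assumption.
  - apply le_joinl.
Qed.

Lemma joinC_iff_bounded a b :
  join a b = join b a <-> exists u, a ≤ u /\ b ≤ u.
Proof.
  split.
  - intros ab; exists (join a b); split.
    + apply le_joinl.
    + rewrite ab; apply le_joinl.
  - intros [u [au bu]]; exact (joinC_bounded a b u au bu).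
Qed.

Lemma join_meet_joinr x y : join x y = join x (meet y (join x y)).
Proof.
  apply le_anti.
  - apply join_le_join_meet.
  - apply join_le; [apply le_joinl | apply le_meetr].
Qed.

Hypothesis distr : is_distributive S meet join.

Lemma meet_join_meetl a b c :
  meet a (join (meet a b) c) = join (meet a b) (meet a c).
Proof.
  set (p := meet a b); set (t := join p c); set (c' := meet c t).
  assert (pt : p ≤ t) by apply le_joinl.
  assert (c't : c' ≤ t) by apply le_meetr.
  assert (act : meet a c ≤ t) by apply meet_le_join_meet.
  assert (pat : p ≤ meet a t) by (apply le_meet; [apply le_meetl | exact pt]).
  assert (ac' : meet (meet a t) c' = meet a c).
  { unfold c'; rewrite act.
    rewrite <- !meetA, (meetC t (meet c t)), <- (meetA c t t), meetxx.
    reflexivity. }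
  pose proof (distr p a c' t) as d.
  assert (tc' : t = join p c') by apply join_meet_joinr.
  rewrite <- pt, <- c't, ac', <- tc', (join_idPr _ _ pat) in d.
  rewrite d, <- meetA, meetxx; reflexivity.
Qed.

End OSemilatticeTheory.

Theorem lemma3p4 (S : Type) (meet join : S -> S -> S)
  (H : is_ado_semilattice meet join) :
  forall a b c : S,
    (join a b = join b a <->
       exists u : S, sle meet a u /\ sle meet b u) /\
    meet a (join (meet a b) c) = meet a (join (meet a c) b).
Proof.
  destruct H as [os [distr _]].
  intros a b c; split.
  - apply joinC_iff_bounded; exact os.
  - rewrite !(meet_join_meetl _ _ _ os distr).
    apply (joinC_bounded _ _ _ os _ _ a); apply (le_meetl _ _ join os).
Qed.
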